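(* The existential-completion 2-monad $T^{ex}$ on $\mathbf{SD}^{exp}$ induces (by restriction) a 2-monad $\widetilde{T^{ex}}$ on $\mathbf{UD}^{exp}$; that is, for every object $P$ of $\mathbf{UD}^{exp}$, $T^{ex}(P)=P^{ex}$ is in $\mathbf{UD}^{exp}$, $T^{ex}$ sends 1-cells of $\mathbf{UD}^{exp}$ to 1-cells of $\mathbf{UD}^{exp}$, and the components at objects of $\mathbf{UD}^{exp}$ of the unit and multiplication of $T^{ex}$ are 1-cells of $\mathbf{UD}^{exp}$.
   Context: A slat-doctrine is a functor $P:\mathcal{C}^{\mathrm{op}}\to\mathbf{Pos}$ with $\mathcal{C}$ having finite products; $P_f$ is reindexing along $f$. It is existential (resp. universal) if reindexing along each product projection has a left (resp. right) adjoint satisfying Beck–Chevalley (for every pullback of a projection $\mathrm{pr}:X\to A$ along $f:A'\to A$, with resulting projection $\mathrm{pr}'$ and $f':X'\to X$, $\exists_{\mathrm{pr}'}P_{f'}=P_f\exists_{\mathrm{pr}}$, resp. $\forall_{\mathrm{pr}'}P_{f'}=P_f\forall_{\mathrm{pr}}$). The 2-category $\mathbf{SD}$: objects slat-doctrines; 1-cells $(F,b):P\to R$ with $F$ a functor between base categories and $b:P\to R\circ F^{\mathrm{op}}$ a natural transformation; 2-cells $\theta:(F,b)\Rightarrow(G,c)$ natural transformations $F\to G$ with $b_A(\alpha)\le R_{\theta_A}(c_A(\alpha))$. $\mathbf{SD}^{exp}$ is the 2-full sub-2-category of slat-doctrines whose base category has exponents, with 1-cells whose functor preserves exponents; $\mathbf{UD}^{exp}$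 is its sub-2-category of universal slat-doctrines and 1-cells preserving the universal structure (commuting with right adjoints along projections). Existential completion: $P^{ex}(A)$ is the poset (reflection) of triples $(A,B,\alpha)$, $\alpha\in P(A\times B)$, with $(A,B,\alpha)\le(A,C,\beta)$ iff some $f:A\times B\to C$ has $\alpha\le P_{\langle\mathrm{pr}_A,f\rangle}(\beta)$, and $P^{ex}_f(C,D,\gamma)=(A,D,P_{f\times 1_D}(\gamma))$. $P\mapsto P^{ex}$ extends to a 2-functor left 2-adjoint to the forgetful 2-functor from existential slat-doctrines to $\mathbf{SD}$; $T^{ex}$ denotes the induced 2-monad (considered on $\mathbf{SD}^{exp}$), with unit component $P(A)\to P^{ex}(A)$, $\alpha\mapsto(A,1,P_{\mathrm{pr}_A}\alpha)$, and multiplication component $(P^{ex})^{ex}(A)\to P^{ex}(A)$, $(A,B,x)\mapsto\exists^{ex}_{\mathrm{pr}_A}(x)$ for $x\in P^{ex}(A\times B)$. *)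

Record Cat := {
  ob : Type;
  hom : ob -> ob -> Type;
  idc : forall A, hom A A;
  cmp : forall A B C, hom B C -> hom A B -> hom A C;
  one : ob;
  bang : forall A, hom A one;
  prd : ob -> ob -> ob;
  p1 : forall A B, hom (prd A B) A;
  p2 : forall A B, hom (prd A B) B;
  pr : forall X A B, hom X A -> hom X B -> hom X (prd A B)
}.
Arguments hom {c} _ _.
Arguments idc {c} A.
Arguments cmp {c A B C} _ _.
Arguments one {c}.
Arguments bang {c} A.
Arguments prd {c} _ _.
Arguments p1 {c A B}.
Arguments p2 {c A B}.
Arguments pr {c X A B} _ _.

Definition fprod {C : Cat} {A A' B B' : ob C} (f : hom A A') (g : hom B B')
  : hom (prd A B) (prd A' B') := pr (cmp f p1) (cmp g p2).

Definition IsCartCat (C : Cat) : Prop :=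
  (forall (A B : ob C) (f : hom A B), cmp (idc B) f = f) /\
  (forall (A B : ob C) (f : hom A B), cmp f (idc A) = f) /\
  (forall (A B D E : ob C) (f : hom A B) (g : hom B D) (h : hom D E),
      cmp h (cmp g f) = cmp (cmp h g) f) /\
  (forall (A : ob C) (f : hom A one), f = bang A) /\
  (forall (X A B : ob C) (f : hom X A) (g : hom X B), cmp p1 (pr f g) = f) /\
  (forall (X A B : ob C) (f : hom X A) (g : hom X B), cmp p2 (pr f g) = g) /\
  (forall (X A B : ob C) (h : hom X (prd A B)), h = pr (cmp p1 h) (cmp p2 h)).

Definition IsExp {C : Cat} (B D E : ob C) (ev : hom (prd E B) D) : Prop :=
  forall A (g : hom (prd A B) D),
    exists h : hom A E,
      cmp ev (fprod h (idc B)) = g /\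
      forall h' : hom A E, cmp ev (fprod h' (idc B)) = g -> h' = h.

Definition HasExp (C : Cat) : Prop :=
  forall B D : ob C, exists (E : ob C) (ev : hom (prd E B) D), IsExp B D E ev.

(* fphi A B is (the inverse of) the canonical comparison
   <F p1, F p2> : F(A x B) -> FA x FB. *)
Record Fun (C D : Cat) := {
  fob : ob C -> ob D;
  fmap : forall A B, @hom C A B -> @hom D (fob A) (fob B);
  fphi : forall A B, @hom D (prd (fob A) (fob B)) (fob (prd A B))
}.
Arguments fob {C D} _ _.
Arguments fmap {C D} _ {A B} _.
Arguments fphi {C D} _ A B.

Definition IsFPFun {C D : Cat} (F : Fun C D) : Prop :=
  (forall A, fmap F (idc A) = idc (fob F A)) /\
  (forall A B E (f : hom A B) (g : hom B E),
      fmap F (cmp g f) = cmp (fmap F g) (fmap F f)) /\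
  (forall X (f g : hom X (fob F one)), f = g) /\
  (forall X, exists f : hom X (fob F one), True) /\
  (forall A B, cmp (pr (fmap F (@p1 C A B)) (fmap F (@p2 C A B))) (fphi F A B)
               = idc _) /\
  (forall A B, cmp (fphi F A B) (pr (fmap F (@p1 C A B)) (fmap F (@p2 C A B)))
               = idc _).

Definition PresExp {C D : Cat} (F : Fun C D) : Prop :=
  forall (B E' E : ob C) (ev : hom (prd E B) E'),
    IsExp B E' E ev ->
    IsExp (fob F B) (fob F E') (fob F E) (cmp (fmap F ev) (fphi F E B)).

Definition IdFun (C : Cat) : Fun C C :=
  {| fob := fun A => A; fmap := fun A B f => f;
     fphi := fun A B => idc (prd A B) |}.

(* The fibres are preordered types; the poset P(A) is their poset
   reflection, so equality in P(A) is [eqv] below. *)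
Record Doc (C : Cat) := {
  car : ob C -> Type;
  le : forall A, car A -> car A -> Prop;
  reix : forall A B, @hom C A B -> car B -> car A
}.
Arguments car {C} _ _.
Arguments le {C} _ {A} _ _.
Arguments reix {C} _ {A B} _ _.

Definition eqv {C} (P : Doc C) {A} (x y : car P A) : Prop :=
  le P x y /\ le P y x.

Definition IsDoctrine {C} (P : Doc C) : Prop :=
  (forall A (x : car P A), le P x x) /\
  (forall A (x y z : car P A), le P x y -> le P y z -> le P x z) /\
  (forall A B (f : hom A B) (x y : car P B),
      le P x y -> le P (reix P f x) (reix P f y)) /\
  (forall A (x : car P A), eqv P (reix P (idc A) x) x) /\
  (forall A B E (f : hom A B) (g : hom B E) (x : car P E),
      eqv P (reix P (cmp g f) x) (reix P f (reix P g x))).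

Definition IsRAll {C} (P : Doc C) (A B : ob C) (g : car P (prd A B) -> car P A)
  : Prop :=
  forall (a : car P A) (x : car P (prd A B)),
    le P (reix P p1 a) x <-> le P a (g x).

(* Universal: right adjoints along all projections, with Beck-Chevalley
   for the pullback of pr_A along f : A' -> A (namely pr_A', f x 1_B). *)
Definition Universal {C} (P : Doc C) : Prop :=
  (forall A B, exists g, IsRAll P A B g) /\
  (forall A A' B (f : hom A' A) g g',
      IsRAll P A B g -> IsRAll P A' B g' ->
      forall x : car P (prd A B),
        eqv P (g' (reix P (fprod f (idc B)) x)) (reix P f (g x))).

Record Mor {C D : Cat} (P : Doc C) (R : Doc D) := {
  mF : Fun C D;
  mb : forall A, car P A -> car R (fob mF A)
}.
Arguments mF {C D P R} _.
Arguments mb {C D P R} _ {A} _.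

Definition IsSDMor {C D} {P : Doc C} {R : Doc D} (m : Mor P R) : Prop :=
  IsFPFun (mF m) /\
  (forall A (x y : car P A), le P x y -> le R (mb m x) (mb m y)) /\
  (forall A B (f : hom A B) (x : car P B),
      eqv R (mb m (reix P f x)) (reix R (fmap (mF m) f) (mb m x))).

Definition IsUDMor {C D} {P : Doc C} {R : Doc D} (m : Mor P R) : Prop :=
  IsSDMor m /\ PresExp (mF m) /\
  (forall A B g g',
      IsRAll P A B g -> IsRAll R (fob (mF m) A) (fob (mF m) B) g' ->
      forall x : car P (prd A B),
        eqv R (mb m (g x)) (g' (reix R (fphi (mF m) A B) (mb m x)))).

Definition Pex {C : Cat} (P : Doc C) : Doc C :=
  {| car := fun A => { B : ob C & car P (prd A B) };
     le := fun A u v =>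
       exists f : hom (prd A (projT1 u)) (projT1 v),
         le P (projT2 u) (reix P (pr p1 f) (projT2 v));
     reix := fun A A' f u =>
       existT _ (projT1 u) (reix P (fprod f (idc (projT1 u))) (projT2 u)) |}.

Definition MorEx {C D} {P : Doc C} {R : Doc D} (m : Mor P R)
  : Mor (Pex P) (Pex R) :=
  @Build_Mor _ _ (Pex P) (Pex R) (mF m)
     (fun A (u : car (Pex P) A) =>
       existT (fun B' => car R (prd (fob (mF m) A) B'))
         (fob (mF m) (projT1 u))
         (reix R (fphi (mF m) A (projT1 u)) (mb m (projT2 u)))).

Definition exUnit {C} (P : Doc C) : Mor P (Pex P) :=
  @Build_Mor _ _ P (Pex P) (IdFun C)
     (fun A a =>
       existT (fun B => car P (prd A B)) one (reix P p1 a)).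

(* a : A x (B x D) -> (A x B) x D *)
Definition assocr {C : Cat} (A B D : ob C)
  : hom (prd A (prd B D)) (prd (prd A B) D) :=
  pr (pr p1 (cmp p1 p2)) (cmp p2 p2).

(* multiplication component: (A, B, x) |-> exists^ex_{pr_A} x, where for
   x = (A x B, D, gamma) one has exists^ex_{pr_A} x = (A, B x D, P_a gamma). *)
Definition exMult {C} (P : Doc C) : Mor (Pex (Pex P)) (Pex P) :=
  @Build_Mor _ _ (Pex (Pex P)) (Pex P) (IdFun C)
     (fun A (u : car (Pex (Pex P)) A) =>
       existT (fun B => car P (prd A B))
         (prd (projT1 u) (projT1 (projT2 u)))
         (reix P (assocr A (projT1 u) (projT1 (projT2 u)))
            (projT2 (projT2 u)))).

(* An element [(D, gamma)] of [P^ex(A x B)] stands for [exists d : D, gamma(a, b, d)], and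
   its universal closure along [B] is computed by Skolemization: [forall b, exists d, gamma]
   is [exists h : D^B, forall b, gamma(a, b, h b)], i.e. [(D^B, forall_B P_k gamma)] with
   [k((a, h), b) = ((a, b), h b)].  The adjunction [pr^* -| forall] in [P^ex] is then
   exponential transposition, and Beck-Chevalley is inherited from [P].
   For a 1-cell [m] the comparison [m (forall x) <= forall (m x)] always holds, and the
   converse holds once every [a] with [pr^* a <= m x] lies below [m (forall x)].  For the
   unit this is Beck-Chevalley in [P]; for the multiplication and for [T^ex m] the witness
   is again a transpose, built in the codomain of [m] from the preserved exponent. *)

From Stdlib Require Import Setoid Morphisms ClassicalEpsilon.

Section CartesianCategory.
Context {C : Cat} (HC : IsCartCat C).

Lemma cmp_idl {A B : ob C} (f : hom A B) : cmp (idc B) f = f.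
Proof. apply HC. Qed.

Lemma cmp_idr {A B : ob C} (f : hom A B) : cmp f (idc A) = f.
Proof. apply HC. Qed.

Lemma cmpA {A B D E : ob C} (f : hom A B) (g : hom B D) (h : hom D E) :
  cmp h (cmp g f) = cmp (cmp h g) f.
Proof. apply HC. Qed.

Lemma p1_pr {X A B : ob C} (f : hom X A) (g : hom X B) : cmp p1 (pr f g) = f.
Proof. apply HC. Qed.

Lemma p2_pr {X A B : ob C} (f : hom X A) (g : hom X B) : cmp p2 (pr f g) = g.
Proof. apply HC. Qed.

Lemma pr_eta {X A B : ob C} (h : hom X (prd A B)) : pr (cmp p1 h) (cmp p2 h) = h.
Proof. symmetry; apply HC. Qed.

Lemma hom_prd_ext {X A B : ob C} (f g : hom X (prd A B)) :
  cmp p1 f = cmp p1 g -> cmp p2 f = cmp p2 g -> f = g.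
Proof. intros H1 H2; rewrite <- (pr_eta f), <- (pr_eta g), H1, H2; reflexivity. Qed.

Lemma hom_one_ext {X : ob C} (f g : hom X one) : f = g.
Proof. destruct HC as (_ & _ & _ & Hone & _); rewrite (Hone _ f), (Hone _ g); reflexivity. Qed.

Lemma pr_cmp {Y X A B : ob C} (f : hom X A) (g : hom X B) (h : hom Y X) :
  cmp (pr f g) h = pr (cmp f h) (cmp g h).
Proof. apply hom_prd_ext; rewrite !cmpA, ?p1_pr, ?p2_pr; reflexivity. Qed.

Lemma pr_p1_p2 {A B : ob C} : pr (@p1 C A B) p2 = idc _.
Proof. rewrite <- (pr_eta (idc _)), !cmp_idr; reflexivity. Qed.

End CartesianCategory.

Ltac cat_simpl HC := repeat progress (unfold fprod;
  rewrite ?(cmp_idl HC), ?(cmp_idr HC), ?(pr_cmp HC), ?(p1_pr HC), ?(p2_pr HC),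
    ?(pr_p1_p2 HC), ?(pr_eta HC);
  rewrite <- ?(cmpA HC)).
Ltac cat_simpl_in HC H := repeat progress (unfold fprod in H;
  rewrite ?(cmp_idl HC), ?(cmp_idr HC), ?(pr_cmp HC), ?(p1_pr HC), ?(p2_pr HC),
    ?(pr_p1_p2 HC), ?(pr_eta HC) in H;
  rewrite <- ?(cmpA HC) in H).
Ltac cat_solve HC := unfold fprod; repeat apply (hom_prd_ext HC);
  try apply (hom_one_ext HC); cat_simpl HC; try reflexivity.

(* Lets setoid rewriting find the doctrine hypotheses by instance resolution. *)
Existing Class IsDoctrine.

Section Doctrine.
Context {C : Cat} (P : Doc C) {HP : IsDoctrine P}.

Lemma doc_le_refl {A} (x : car P A) : le P x x.
Proof. apply HP. Qed.

Lemma doc_le_trans {A} (x y z : car P A) : le P x y -> le P y z -> le P x z.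
Proof. apply HP. Qed.

Lemma reix_mono {A B} (f : hom A B) x y : le P x y -> le P (reix P f x) (reix P f y).
Proof. apply HP. Qed.

Lemma reix_id {A} (x : car P A) : eqv P (reix P (idc A) x) x.
Proof. apply HP. Qed.

Lemma reix_comp {A B E} (f : hom A B) (g : hom B E) x :
  eqv P (reix P f (reix P g x)) (reix P (cmp g f) x).
Proof. destruct (proj2 (proj2 (proj2 (proj2 HP))) A B E f g x); split; assumption. Qed.

Lemma reix_hom_eq {A B} (f g : hom A B) x : f = g -> reix P f x = reix P g x.
Proof. intros ->; reflexivity. Qed.

Lemma eqv_le {A} (x y : car P A) : eqv P x y -> le P x y.
Proof. intros []; assumption. Qed.

End Doctrine.

#[export] Instance eqv_Equivalence {C} (P : Doc C) {HP : IsDoctrine P} A :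
  Equivalence (@eqv C P A).
Proof.
  split; unfold eqv; red.
  - intros; split; apply doc_le_refl; assumption.
  - tauto.
  - intros x y z [] []; split; eapply doc_le_trans; eauto.
Qed.

#[export] Instance le_PreOrder {C} (P : Doc C) {HP : IsDoctrine P} A : PreOrder (@le C P A).
Proof. split; red; intros; [apply doc_le_refl | eapply doc_le_trans]; eauto. Qed.

#[export] Instance le_eqv_Proper {C} (P : Doc C) {HP : IsDoctrine P} A :
  Proper (@eqv C P A ==> @eqv C P A ==> iff) (@le C P A).
Proof.
  intros x x' [] y y' []; split; intros; do 2 (eapply doc_le_trans; eauto).
Qed.

#[export] Instance reix_eqv_Proper {C} (P : Doc C) {HP : IsDoctrine P} A B f :
  Proper (@eqv C P B ==> @eqv C P A) (@reix C P A B f).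
Proof. intros x y []; split; apply reix_mono; assumption. Qed.

#[export] Instance reix_le_Proper {C} (P : Doc C) {HP : IsDoctrine P} A B f :
  Proper (@le C P B ==> @le C P A) (@reix C P A B f).
Proof. intros x y ?; apply reix_mono; assumption. Qed.

Ltac reix_by_cat HC := rewrite ?(reix_comp _); erewrite reix_hom_eq; [reflexivity|]; cat_solve HC.

Section ExistentialCompletion.
Context {C : Cat} (HC : IsCartCat C) (P : Doc C) {HP : IsDoctrine P}.

Lemma Pex_le_of_le {A B} (a b : car P (prd A B)) :
  le P a b -> le (Pex P) (existT _ B a) (existT _ B b).
Proof. intro H; exists p2; simpl; rewrite (pr_p1_p2 HC), reix_id; assumption. Qed.

Lemma Pex_eqv_of_eqv {A B} (a b : car P (prd A B)) :
  eqv P a b -> eqv (Pex P) (existT _ B a) (existT _ B b).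
Proof. intros []; split; apply Pex_le_of_le; assumption. Qed.

Lemma Pex_doctrine : IsDoctrine (Pex P).
Proof.
  split; [|split; [|split; [|split]]].
  - intros A [B a]; apply Pex_le_of_le; reflexivity.
  - intros A [B a] [B' b] [D d] [f Hf] [g Hg]; simpl in *.
    exists (cmp g (pr p1 f)); rewrite Hf, Hg; reix_by_cat HC.
  - intros A A' h [B a] [B' b] [f Hf]; simpl in *.
    exists (cmp f (fprod h (idc B))); rewrite Hf; reix_by_cat HC.
  - intros A [B a]; apply Pex_eqv_of_eqv; simpl.
    erewrite reix_hom_eq; [apply (reix_id _)|]; cat_solve HC.
  - intros A A' A'' f g [B a]; apply Pex_eqv_of_eqv; simpl; reix_by_cat HC.
Qed.

End ExistentialCompletion.

Section RightAdjoint.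
Context {C : Cat} (Q : Doc C) {HQ : IsDoctrine Q} (A B : ob C)
  (g : car Q (prd A B) -> car Q A) (Hg : IsRAll Q A B g).

Lemma rall_counit y : le Q (reix Q p1 (g y)) y.
Proof. apply Hg; reflexivity. Qed.

Lemma rall_mono y y' : le Q y y' -> le Q (g y) (g y').
Proof. intro H; apply Hg; rewrite rall_counit; assumption. Qed.

Lemma rall_eqv y y' : eqv Q y y' -> eqv Q (g y) (g y').
Proof. intros []; split; apply rall_mono; assumption. Qed.

Lemma rall_unique g' : IsRAll Q A B g' -> forall y, eqv Q (g y) (g' y).
Proof.
  intros Hg' y; split.
  - apply Hg', rall_counit.
  - apply Hg, Hg'; reflexivity.
Qed.

Lemma rall_le_of y z : (forall a, le Q (reix Q p1 a) y -> le Q a z) -> le Q (g y) z.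
Proof. intro H; apply H, rall_counit. Qed.

End RightAdjoint.

Lemma le_reix_rall {C} (Q : Doc C) {HQ : IsDoctrine Q} (HU : Universal Q)
  {A A' B : ob C} (f : hom A' A) g (Hg : IsRAll Q A B g) a x :
  le Q (reix Q p1 a) (reix Q (fprod f (idc B)) x) -> le Q a (reix Q f (g x)).
Proof.
  destruct (proj1 HU A' B) as [g' Hg']; intro H.
  rewrite <- (proj2 HU _ _ _ f g g' Hg Hg' x); apply Hg', H.
Qed.

Definition swp {C : Cat} (A X Y : ob C) : hom (prd (prd A X) Y) (prd (prd A Y) X) :=
  pr (pr (cmp p1 p1) p2) (cmp p2 p1).

Lemma reix_p1_swp {C} (HC : IsCartCat C) (Q : Doc C) {HQ : IsDoctrine Q}
  {A X Y : ob C} (a : car Q (prd A X)) :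
  eqv Q (reix Q p1 a) (reix Q (swp A X Y) (reix Q (fprod p1 (idc X)) a)).
Proof. unfold swp; reix_by_cat HC. Qed.

Lemma reix_fprod_p1_swp {C} (HC : IsCartCat C) (Q : Doc C) {HQ : IsDoctrine Q}
  {A X Y : ob C} (a : car Q (prd A X)) :
  eqv Q (reix Q (fprod p1 (idc X)) a) (reix Q (swp A Y X) (reix Q p1 a)).
Proof. unfold swp; reix_by_cat HC. Qed.

Section SkolemForall.
Context {C : Cat} (HC : IsCartCat C) (Q : Doc C) {HQ : IsDoctrine Q} (B : ob C)
  (expo : ob C -> ob C) (eval : forall D, hom (prd (expo D) B) D)
  (Hexpo : forall D, IsExp B D (expo D) (eval D))
  (allQ : forall X, car Q (prd X B) -> car Q X)
  (Hall : forall X, IsRAll Q X B (allQ X))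
  (Hbc : forall X X' (f : hom X' X) y,
     eqv Q (allQ X' (reix Q (fprod f (idc B)) y)) (reix Q f (allQ X y))).

Definition skolem_eval (A D : ob C) : hom (prd (prd A (expo D)) B) (prd (prd A B) D) :=
  pr (fprod p1 (idc B)) (cmp (eval D) (fprod p2 (idc B))).

Definition Pex_all (A : ob C) (u : car (Pex Q) (prd A B)) : car (Pex Q) A :=
  existT _ (expo (projT1 u))
    (allQ (prd A (expo (projT1 u))) (reix Q (skolem_eval A (projT1 u)) (projT2 u))).

Lemma Pex_all_adj A : IsRAll (Pex Q) A B (Pex_all A).
Proof.
  intros [X a] [D c]; simpl; split.
  - intros [f Hf]; simpl in *.
    destruct (Hexpo D (prd A X) (cmp f (swp A X B))) as [h [Hh _]].
    exists h; rewrite <- Hbc; apply Hall.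
    rewrite (reix_p1_swp HC _), Hf.
    unfold skolem_eval, swp in *; cat_simpl_in HC Hh.
    reix_by_cat HC; symmetry; exact Hh.
  - intros [h Hh]; simpl in *.
    exists (cmp (eval D) (cmp (fprod h (idc B)) (swp A B X))).
    rewrite <- Hbc in Hh; apply Hall in Hh.
    rewrite (reix_fprod_p1_swp HC _), Hh.
    unfold skolem_eval, swp; reix_by_cat HC.
Qed.

Lemma Pex_all_bc A A' (f : hom A' A) x :
  eqv (Pex Q) (Pex_all A' (reix (Pex Q) (fprod f (idc B)) x)) (reix (Pex Q) f (Pex_all A x)).
Proof.
  destruct x as [D c]; apply (Pex_eqv_of_eqv HC _); simpl; rewrite <- Hbc.
  apply (rall_eqv Q _ B _ (Hall _)).
  unfold skolem_eval; reix_by_cat HC.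
Qed.

End SkolemForall.

Section ChosenStructure.
Context {C : Cat} (HE : HasExp C).

Definition exp_data (B D : ob C) : {E : ob C & {ev : hom (prd E B) D | IsExp B D E ev}} :=
  let s := constructive_indefinite_description _ (HE B D) in
  existT _ (proj1_sig s) (constructive_indefinite_description _ (proj2_sig s)).

Definition exp_ob (B D : ob C) : ob C := projT1 (exp_data B D).

Definition exp_ev (B D : ob C) : hom (prd (exp_ob B D) B) D := proj1_sig (projT2 (exp_data B D)).

Lemma exp_ev_spec B D : IsExp B D (exp_ob B D) (exp_ev B D).
Proof. exact (proj2_sig (projT2 (exp_data B D))). Qed.

Context (Q : Doc C) (HU : Universal Q).

Definition all_of (B X : ob C) : car Q (prd X B) -> car Q X :=
  proj1_sig (constructive_indefinite_description _ (proj1 HU X B)).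

Lemma all_of_spec B X : IsRAll Q X B (all_of B X).
Proof. exact (proj2_sig (constructive_indefinite_description _ _)). Qed.

Lemma all_of_bc B X X' (f : hom X' X) y :
  eqv Q (all_of B X' (reix Q (fprod f (idc B)) y)) (reix Q f (all_of B X y)).
Proof. apply (proj2 HU) with (g := all_of B X); apply all_of_spec. Qed.

Definition Pex_forall (B A : ob C) := Pex_all Q B (exp_ob B) (exp_ev B) (all_of B) A.

End ChosenStructure.

Section ExistentialCompletionUniversal.
Context {C : Cat} (HC : IsCartCat C) (HE : HasExp C) (P : Doc C) {HP : IsDoctrine P}
  (HU : Universal P).

Lemma Pex_forall_adj B A : IsRAll (Pex P) A B (Pex_forall HE P HU B A).
Proof.
  apply Pex_all_adj; [assumption | assumption | apply exp_ev_spec | apply all_of_spec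
    | apply all_of_bc].
Qed.

Lemma Pex_forall_bc B A A' (f : hom A' A) x :
  eqv (Pex P) (Pex_forall HE P HU B A' (reix (Pex P) (fprod f (idc B)) x))
    (reix (Pex P) f (Pex_forall HE P HU B A x)).
Proof. apply Pex_all_bc; [assumption | assumption | apply all_of_spec | apply all_of_bc]. Qed.

Lemma Pex_universal : Universal (Pex P).
Proof.
  pose proof (Pex_doctrine HC P).
  split.
  - intros A B; exists (Pex_forall HE P HU B A); apply Pex_forall_adj.
  - intros A A' B f g g' Hg Hg' x.
    rewrite (rall_unique _ _ _ _ Hg' _ (Pex_forall_adj B A')).
    rewrite (rall_unique _ _ _ _ Hg _ (Pex_forall_adj B A)).
    apply Pex_forall_bc.
Qed.

End ExistentialCompletionUniversal.

Section ProductPreservingFunctor.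
Context {C D : Cat} (HC : IsCartCat C) (HD : IsCartCat D) (F : Fun C D) (HF : IsFPFun F).

Lemma fmap_id A : fmap F (idc A) = idc (fob F A).
Proof. apply HF. Qed.

Lemma fmap_cmp {A B E : ob C} (f : hom A B) (g : hom B E) :
  fmap F (cmp g f) = cmp (fmap F g) (fmap F f).
Proof. apply HF. Qed.

Lemma hom_fob_one_ext X (f g : hom X (fob F one)) : f = g.
Proof. apply HF. Qed.

Lemma fmap_p1_fphi (A B : ob C) : cmp (fmap F (@p1 C A B)) (fphi F A B) = p1.
Proof.
  rewrite <- (p1_pr HD (fmap F p1) (fmap F p2)), <- (cmpA HD).
  rewrite (proj1 (proj2 (proj2 (proj2 (proj2 HF))))); apply (cmp_idr HD).
Qed.

Lemma fmap_p2_fphi (A B : ob C) : cmp (fmap F (@p2 C A B)) (fphi F A B) = p2.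
Proof.
  rewrite <- (p2_pr HD (fmap F p1) (fmap F p2)), <- (cmpA HD).
  rewrite (proj1 (proj2 (proj2 (proj2 (proj2 HF))))); apply (cmp_idr HD).
Qed.

Lemma fmap_p1_fphi_cmp (A B : ob C) X (x : hom X _) :
  cmp (fmap F (@p1 C A B)) (cmp (fphi F A B) x) = cmp p1 x.
Proof. rewrite (cmpA HD), fmap_p1_fphi; reflexivity. Qed.

Lemma fmap_p2_fphi_cmp (A B : ob C) X (x : hom X _) :
  cmp (fmap F (@p2 C A B)) (cmp (fphi F A B) x) = cmp p2 x.
Proof. rewrite (cmpA HD), fmap_p2_fphi; reflexivity. Qed.

Lemma hom_fob_prd_ext (A B : ob C) X (u v : hom X (fob F (prd A B))) :
  cmp (fmap F p1) u = cmp (fmap F p1) v -> cmp (fmap F p2) u = cmp (fmap F p2) v -> u = v.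
Proof.
  intros H1 H2.
  rewrite <- (cmp_idl HD u), <- (cmp_idl HD v), <- (proj2 (proj2 (proj2 (proj2 (proj2 HF))))).
  rewrite <- !(cmpA HD), !(pr_cmp HD), H1, H2; reflexivity.
Qed.

Lemma fmap_pr (X A B : ob C) (f : hom X A) (g : hom X B) :
  fmap F (pr f g) = cmp (fphi F A B) (pr (fmap F f) (fmap F g)).
Proof.
  apply hom_fob_prd_ext; rewrite ?fmap_p1_fphi_cmp, ?fmap_p2_fphi_cmp, <- fmap_cmp,
    ?(p1_pr HD), ?(p2_pr HD), ?(p1_pr HC), ?(p2_pr HC); reflexivity.
Qed.

End ProductPreservingFunctor.

Ltac cat_simplF HC HD HF := repeat progress (unfold fprod;
  rewrite ?(fmap_cmp _ HF), ?(fmap_id _ HF), ?(fmap_pr HC HD _ HF),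
    ?(fmap_p1_fphi_cmp HD _ HF), ?(fmap_p2_fphi_cmp HD _ HF),
    ?(fmap_p1_fphi HD _ HF), ?(fmap_p2_fphi HD _ HF),
    ?(cmp_idl HC), ?(cmp_idr HC), ?(pr_cmp HC), ?(p1_pr HC), ?(p2_pr HC),
    ?(pr_p1_p2 HC), ?(pr_eta HC),
    ?(cmp_idl HD), ?(cmp_idr HD), ?(pr_cmp HD), ?(p1_pr HD), ?(p2_pr HD),
    ?(pr_p1_p2 HD), ?(pr_eta HD);
  rewrite <- ?(cmpA HD), <- ?(cmpA HC)).
Ltac cat_solveF HC HD HF := unfold fprod;
  repeat (first [apply (hom_prd_ext HD) | apply (hom_fob_prd_ext HD _ HF)]);
  try apply (hom_one_ext HD); try apply (hom_fob_one_ext _ HF); cat_simplF HC HD HF;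
  try reflexivity.

Section SDMorphism.
Context {C D : Cat} (HD : IsCartCat D) (P : Doc C) (R : Doc D)
  {HP : IsDoctrine P} {HR : IsDoctrine R} (m : Mor P R) (Hm : IsSDMor m).

Lemma mb_mono A (x y : car P A) : le P x y -> le R (mb m x) (mb m y).
Proof. apply Hm. Qed.

Lemma mb_nat A B (f : hom A B) x :
  eqv R (mb m (reix P f x)) (reix R (fmap (mF m) f) (mb m x)).
Proof. apply Hm. Qed.

Lemma mb_rall_le A B g g' (Hg : IsRAll P A B g)
  (Hg' : IsRAll R (fob (mF m) A) (fob (mF m) B) g') x :
  le R (mb m (g x)) (g' (reix R (fphi (mF m) A B) (mb m x))).
Proof.
  apply Hg'.
  transitivity (reix R (fphi (mF m) A B) (reix R (fmap (mF m) p1) (mb m (g x)))).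
  { rewrite (reix_comp _), (fmap_p1_fphi HD _ (proj1 Hm)); reflexivity. }
  rewrite <- mb_nat; apply (reix_mono _), mb_mono, (rall_counit P A B g Hg).
Qed.

Lemma IsUDMor_intro :
  PresExp (mF m) ->
  (forall A B g, IsRAll P A B g -> forall x a,
     le R (reix R p1 a) (reix R (fphi (mF m) A B) (mb m x)) -> le R a (mb m (g x))) ->
  IsUDMor m.
Proof.
  intros HPE Hle; split; [exact Hm | split; [exact HPE|]].
  intros A B g g' Hg Hg' x; split.
  - apply mb_rall_le; assumption.
  - apply (rall_le_of R _ _ g' Hg'); intros a Ha; apply Hle; assumption.
Qed.

End SDMorphism.

Lemma IdFun_FP {C} (HC : IsCartCat C) : IsFPFun (IdFun C).
Proof.
  split; [|split; [|split; [|split; [|split]]]]; simpl; intros.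
  - reflexivity.
  - reflexivity.
  - apply (hom_one_ext HC).
  - exists (bang X); trivial.
  - rewrite (pr_p1_p2 HC); apply (cmp_idr HC).
  - rewrite (pr_p1_p2 HC); apply (cmp_idr HC).
Qed.

Lemma IdFun_PresExp {C} (HC : IsCartCat C) : PresExp (IdFun C).
Proof. intros B E' E ev H; simpl; rewrite (cmp_idr HC); exact H. Qed.

Section Unit.
Context {C : Cat} (HC : IsCartCat C) (P : Doc C) {HP : IsDoctrine P} (HU : Universal P).

Lemma exUnit_SD : IsSDMor (exUnit P).
Proof.
  split; [apply (IdFun_FP HC) | split].
  - intros A x y H; apply (Pex_le_of_le HC _), (reix_mono _), H.
  - intros A B f x; apply (Pex_eqv_of_eqv HC _); simpl; reix_by_cat HC.
Qed.

Lemma exUnit_UD : IsUDMor (exUnit P).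
Proof.
  pose proof (Pex_doctrine HC P).
  apply (IsUDMor_intro HC _ _ _ exUnit_SD (IdFun_PresExp HC)).
  intros A B g Hg x [X a] [f Hf]; simpl in *.
  exists (bang _).
  rewrite (reix_comp _); erewrite (reix_hom_eq _ _ p1); [|cat_solve HC].
  apply (le_reix_rall P HU p1 g Hg).
  rewrite (reix_p1_swp HC _), Hf; unfold swp; reix_by_cat HC.
Qed.

End Unit.

Section Multiplication.
Context {C : Cat} (HC : IsCartCat C) (HE : HasExp C) (P : Doc C) {HP : IsDoctrine P}
  (HU : Universal P).

Lemma exMult_SD : IsSDMor (exMult P).
Proof.
  split; [apply (IdFun_FP HC) | split].
  - intros A [B [D c]] [B' [D' d]] [f [g Hg]]; simpl in *.
    exists (pr (cmp f (cmp p1 (assocr A B D))) (cmp g (assocr A B D))).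
    rewrite Hg; unfold assocr; reix_by_cat HC.
  - intros A A' f [B [D c]]; apply (Pex_eqv_of_eqv HC _); simpl.
    unfold assocr; reix_by_cat HC.
Qed.

Lemma exMult_UD : IsUDMor (exMult P).
Proof.
  pose proof (Pex_doctrine HC P); pose proof (Pex_doctrine HC (Pex P)).
  apply (IsUDMor_intro HC _ _ _ exMult_SD (IdFun_PresExp HC)).
  intros A B g Hg x a Ha.
  pose (G := Pex_all (Pex P) B (exp_ob HE B) (exp_ev HE B) (Pex_forall HE P HU B) A).
  assert (HG : IsRAll (Pex (Pex P)) A B G).
  { apply Pex_all_adj; [assumption | assumption | apply exp_ev_spec
      | apply Pex_forall_adj | apply Pex_forall_bc]; assumption. }
  transitivity (mb (exMult P) (G x)).
  2: apply (mb_mono _ _ _ exMult_SD), eqv_le, (rall_unique _ _ _ _ HG _ Hg).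
  destruct a as [X a], x as [D [D' c]], Ha as [f Hf].
  unfold G, Pex_forall, Pex_all in *; simpl in *.
  destruct (exp_ev_spec HE B D (prd A X) (cmp (cmp p1 f) (swp A X B))) as [h [Hh _]].
  destruct (exp_ev_spec HE B D' (prd A X) (cmp (cmp p2 f) (swp A X B))) as [h' [Hh' _]].
  exists (pr h h').
  rewrite (reix_comp _); apply (le_reix_rall P HU _ _ (all_of_spec P HU B _)).
  rewrite (reix_p1_swp HC _), Hf.
  unfold swp, assocr, skolem_eval in *; cat_simpl_in HC Hh; cat_simpl_in HC Hh'.
  reix_by_cat HC; symmetry; assumption.
Qed.

End Multiplication.

Section CompletionOfMorphism.
Context {C D : Cat} (HC : IsCartCat C) (HD : IsCartCat D) (HE : HasExp C)
  (P : Doc C) {HP : IsDoctrine P} (HU : Universal P)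
  (R : Doc D) {HR : IsDoctrine R} (HUR : Universal R)
  (m : Mor P R) (Hm : IsSDMor m).

Let F := mF m.
Let HF : IsFPFun F := proj1 Hm.

Lemma MorEx_SD : IsSDMor (MorEx m).
Proof.
  split; [exact HF | split].
  - intros A [B a] [B' b] [f Hf]; simpl in *.
    exists (cmp (fmap F f) (fphi F A B)).
    rewrite (mb_mono _ _ _ Hm _ _ _ Hf), (mb_nat _ _ _ Hm).
    rewrite !(reix_comp _); erewrite reix_hom_eq; [reflexivity|]; cat_solveF HC HD HF.
  - intros A A' h [B a]; apply (Pex_eqv_of_eqv HD _); simpl.
    rewrite (mb_nat _ _ _ Hm), !(reix_comp _); erewrite reix_hom_eq; [reflexivity|].
    cat_solveF HC HD HF.
Qed.

(* The transpose witnessing the required inequality lives in [D], where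
   [F] of the chosen exponent is again an exponent. *)
Lemma MorEx_UD : IsUDMor m -> IsUDMor (MorEx m).
Proof.
  intros (_ & HPE & Hm_all).
  pose proof (Pex_doctrine HC P); pose proof (Pex_doctrine HD R).
  apply (IsUDMor_intro HD _ _ _ MorEx_SD HPE).
  intros A B g Hg x a Ha.
  transitivity (mb (MorEx m) (Pex_forall HE P HU B A x)).
  2: apply (mb_mono _ _ _ MorEx_SD), eqv_le,
       (rall_unique _ _ _ _ (Pex_forall_adj HC HE P HU B A) _ Hg).
  destruct a as [X a], x as [E c], Ha as [f Hf].
  unfold Pex_forall, Pex_all; simpl in *.
  destruct (HPE B E _ _ (exp_ev_spec HE B E) (prd (fob F A) X)
              (cmp f (swp (fob F A) X (fob F B)))) as [h [Hh _]].
  exists h.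
  rewrite (Hm_all _ B _ _ (all_of_spec P HU B _) (all_of_spec R HUR _ _)), !(reix_comp _).
  apply (le_reix_rall R HUR _ _ (all_of_spec R HUR _ _)).
  rewrite (mb_nat _ _ _ Hm), (reix_p1_swp HD _), Hf.
  unfold swp, skolem_eval in *; cat_simpl_in HD Hh.
  rewrite !(reix_comp _); erewrite reix_hom_eq; [reflexivity|].
  cat_solveF HC HD HF; symmetry; exact Hh.
Qed.

End CompletionOfMorphism.

Theorem theorem7 :
  (* T^ex sends objects of UD^exp to objects of UD^exp *)
  (forall (C : Cat) (P : Doc C),
     IsCartCat C -> HasExp C -> IsDoctrine P -> Universal P ->
     IsDoctrine (Pex P) /\ Universal (Pex P)) /\
  (* T^ex sends 1-cells of UD^exp to 1-cells of UD^exp *)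
  (forall (C D : Cat) (P : Doc C) (R : Doc D) (m : Mor P R),
     IsCartCat C -> HasExp C -> IsDoctrine P -> Universal P ->
     IsCartCat D -> HasExp D -> IsDoctrine R -> Universal R ->
     IsUDMor m -> IsUDMor (MorEx m)) /\
  (* unit and multiplication components at objects of UD^exp are 1-cells of UD^exp *)
  (forall (C : Cat) (P : Doc C),
     IsCartCat C -> HasExp C -> IsDoctrine P -> Universal P ->
     IsUDMor (exUnit P) /\ IsUDMor (exMult P)).
Proof.
  split; [|split].
  - intros C P HC HE HP HU; split; [exact (Pex_doctrine HC P) | exact (Pex_universal HC HE P HU)].
  - intros C D P R m HC HE HP HU HD _ HR HUR Hm.
    exact (MorEx_UD HC HD HE P HU R HUR m (proj1 Hm) Hm).
  - intros C P HC HE HP HU; split; [exact (exUnit_UD HC P HU) | exact (exMult_UD HC HE P HU)].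
Qed.
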